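(* Let $\Sigma$ be a finite alphabet and suppose $C:\Sigma^k\to\Sigma^n$ is a $(q,\delta,1-\varepsilon,s)$-relaxed locally decodable code with a nonadaptive relaxed decoder, where $s<|\Sigma|^{-q}$. Then for any error radius \[ r\in\Bigl(0,\ \tfrac{\delta(|\Sigma|-1)}{q|\Sigma|}\Bigl(1-\tfrac{\varepsilon|\Sigma|}{|\Sigma|-1}-s|\Sigma|^{q}\Bigr)\Bigr), \] the code $C$ is also a \[ \Bigl(q,\ r,\ \varepsilon+s|\Sigma|^{q}\Bigl(1-\tfrac{1}{|\Sigma|}\Bigr)+\tfrac{rq}{\delta}\Bigr)\text{-locally decodable code}. \] In particular, for $\Sigma=\{0,1\}$ it is a $\bigl(q,r,\varepsilon+\frac{s2^q}{2}+\frac{rq}{\delta}\bigr)$-locally decodable code.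
   Context: $\Delta$ denotes Hamming distance. A code $C:\Sigma^k\to\Sigma^n$ is a $(q,\delta,s)$-LDC if there is a randomized decoder reading at most $q$ positions of its oracle $y\in\Sigma^n$ and outputting a symbol in $\Sigma$ such that for all $b\in\Sigma^k$, $i\in[k]$, $y$ with $\Delta(y,C(b))\le\delta n$, $\Pr[\mathsf{Dec}^y(i)\ne b_i]\le s$. $C$ is a $(q,\delta,c,s)$-RLDC if there is a $q$-query decoder with outputs in $\Sigma\cup\{\bot\}$ such that for all such $b,i,y$: (completeness) $\Pr[\mathsf{Dec}^{C(b)}(i)=b_i]\ge c$, and (soundness) $\Pr[\mathsf{Dec}^y(i)\notin\{b_i,\bot\}]\le s$. A decoder is nonadaptive if the positions it queries do not depend on answers to earlier queries. *)

From HB Require Import structures.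
From mathcomp Require Import all_boot all_order all_algebra.
From mathcomp Require Import reals.
Set Implicit Arguments. Unset Strict Implicit. Unset Printing Implicit Defensive.
Import Order.TTheory GRing.Theory Num.Theory.
Local Open Scope ring_scope.

Definition word (Sigma : finType) (m : nat) := {ffun 'I_m -> Sigma}.

Definition hamming (Sigma : finType) (m : nat) (x y : word Sigma m) : nat :=
  #|[set j : 'I_m | x j != y j]|.

Definition is_distr (R : realType) (Omega : finType) (mu : {ffun Omega -> R}) :=
  (forall w, 0 <= mu w) /\ \sum_(w : Omega) mu w = 1.

Definition Pr (R : realType) (Omega : finType) (mu : {ffun Omega -> R})
  (E : pred Omega) : R := \sum_(w : Omega | E w) mu w.

(* Deterministic (possibly adaptive) query algorithms: decision trees that
   query positions of an oracle in Sigma^n and output a value in O. *)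
Inductive dtree (n : nat) (Sigma O : Type) : Type :=
| Leaf of O
| Query of 'I_n & (Sigma -> dtree n Sigma O).

Arguments Leaf {n Sigma O}.
Arguments Query {n Sigma O}.

Fixpoint run_dtree (n : nat) (Sigma O : Type) (t : dtree n Sigma O)
  (y : 'I_n -> Sigma) : O :=
  match t with
  | Leaf o => o
  | Query j f => run_dtree (f (y j)) y
  end.

Inductive depth_le (n : nat) (Sigma O : Type) : nat -> dtree n Sigma O -> Prop :=
| depth_leaf d o : depth_le d (Leaf o)
| depth_query d j f : (forall a, depth_le d (f a)) -> depth_le d.+1 (Query j f).

(* (q, delta, s)-LDC: a randomized decoder (a distribution mu over random
   seeds, each seed giving a deterministic adaptive algorithm making at most q
   queries), with error probability at most s within radius delta * n. *)
Definition is_LDC (R : realType) (Sigma : finType) (k n : nat)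
  (C : word Sigma k -> word Sigma n) (q : nat) (delta s : R) : Prop :=
  exists (Omega : finType) (mu : {ffun Omega -> R})
         (Dec : 'I_k -> Omega -> dtree n Sigma Sigma),
    is_distr mu /\
    (forall i w, depth_le q (Dec i w)) /\
    (forall (b : word Sigma k) (i : 'I_k) (y : word Sigma n),
        (hamming y (C b))%:R <= delta * n%:R ->
        Pr mu (fun w => run_dtree (Dec i w) y != b i) <= s).

(* (q, delta, c, s)-RLDC with a NONADAPTIVE relaxed decoder: for each index i
   and seed w, the decoder queries the q positions Pos i w (fixed in advance,
   independent of the answers) and outputs Out i w (answers), where None
   stands for the rejection symbol bot. *)
Definition is_nonadaptive_RLDC (R : realType) (Sigma : finType) (k n : nat)
  (C : word Sigma k -> word Sigma n) (q : nat) (delta c s : R) : Prop :=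
  exists (Omega : finType) (mu : {ffun Omega -> R})
         (Pos : 'I_k -> Omega -> {ffun 'I_q -> 'I_n})
         (Out : 'I_k -> Omega -> {ffun 'I_q -> Sigma} -> option Sigma),
    is_distr mu /\
    let dec i w (y : word Sigma n) := Out i w [ffun t => y (Pos i w t)] in
    (forall (b : word Sigma k) (i : 'I_k),
        c <= Pr mu (fun w => dec i w (C b) == Some (b i))) /\
    (forall (b : word Sigma k) (i : 'I_k) (y : word Sigma n),
        (hamming y (C b))%:R <= delta * n%:R ->
        Pr mu (fun w => (dec i w y != Some (b i)) && (dec i w y != None)) <= s).

From HB Require Import structures.
From mathcomp Require Import all_boot all_order all_algebra.
From mathcomp Require Import reals.
From mathcomp Require Import ring lra.
Set Implicit Arguments. Unset Strict Implicit. Unset Printing Implicit Defensive.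
Import Order.TTheory GRing.Theory Num.Theory.
Local Open Scope ring_scope.

(* Fix an index and call a position heavy when the relaxed decoder queries it
   with probability at least q/(delta n); by Markov's inequality there are at
   most delta n heavy positions.  The local decoder draws a seed of the relaxed
   decoder together with a uniform guess u, makes the same queries, and outputs
   a symbol that the relaxed decoder would output for SOME filling of the
   queried heavy positions, preferring u.  It can only err if a queried light
   position is corrupted (probability at most r q / delta), if the relaxed
   decoder fails on the codeword itself (at most eps), or if some filling of
   the heavy positions fools the relaxed decoder and u is wrong.  Words that
   differ from the codeword only on heavy positions are within radius delta n,
   and a fooling filling of the at most q queried heavy positions is shared by
   a fraction |Sigma|^-q of all fillings; so averaging soundness over all
   fillings bounds the probability of a foolable seed by s |Sigma|^q.  The
   guess is wrong with probability 1 - 1/|Sigma|. *)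

Section Probability.
Variables (R : realType) (Omega : finType) (mu : {ffun Omega -> R}).
Hypothesis mu_ge0 : forall w, 0 <= mu w.

Lemma Pr_ge0 (E : pred Omega) : 0 <= Pr mu E.
Proof. exact: sumr_ge0. Qed.

Lemma Pr_mkcond (E : pred Omega) : Pr mu E = \sum_w (if E w then mu w else 0).
Proof. exact: big_mkcond. Qed.

Lemma le_Pr (E F : pred Omega) : (forall w, E w -> F w) -> Pr mu E <= Pr mu F.
Proof.
move=> EF; rewrite !Pr_mkcond; apply: ler_sum => w _.
by case Ew: (E w); [rewrite EF | case: (F w)].
Qed.

Lemma Pr_union_le (E F : pred Omega) :
  Pr mu (fun w => E w || F w) <= Pr mu E + Pr mu F.
Proof.
rewrite !Pr_mkcond -big_split; apply: ler_sum => w _.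
by case: (E w); case: (F w) => /=; rewrite ?addr0 ?add0r ?lerDl.
Qed.

Lemma Pr_exists_le (I : finType) (A : {set I}) (E : I -> pred Omega) :
  Pr mu (fun w => [exists j in A, E j w]) <= \sum_(j in A) Pr mu (E j).
Proof.
rewrite Pr_mkcond (eq_bigr _ (fun j _ => Pr_mkcond (E j))) exchange_big.
apply: ler_sum => w _.
have summand_ge0 j : 0 <= (if E j w then mu w else 0) by case: (E j w).
case: existsP => [[j /andP[jA Ejw]] | _]; last exact: sumr_ge0.
by rewrite (bigD1 j) //= Ejw lerDl sumr_ge0.
Qed.

Lemma Pr_predC (E : pred Omega) :
  \sum_w mu w = 1 -> Pr mu (fun w => ~~ E w) = 1 - Pr mu E.
Proof. by move=> <-; rewrite [\sum_w mu w](bigID E) addrAC subrr add0r. Qed.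

Lemma sum_Pr (I : finType) (E : I -> pred Omega) :
  \sum_j Pr mu (E j) = \sum_w mu w * #|[pred j | E j w]|%:R.
Proof.
rewrite (eq_bigr _ (fun j _ => Pr_mkcond (E j))) exchange_big.
apply: eq_bigr => w _; rewrite -big_mkcond sumr_const mulr_natr.
by congr (_ *+ _); apply: eq_card.
Qed.

End Probability.

Lemma card_ge_mul_le_sum (R : realFieldType) (I : finType) (p : I -> R) (c : R) :
  (forall j, 0 <= p j) -> #|[set j | c <= p j]|%:R * c <= \sum_j p j.
Proof.
move=> p_ge0; rewrite (bigID [pred j | c <= p j]) /= -[X in X <= _]addr0.
apply: lerD; last exact: sumr_ge0.
rewrite mulr_natl -sumr_const [X in _ <= X](eq_bigl (mem [set j | c <= p j])).
  by apply: ler_sum => j; rewrite inE.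
by move=> j /=; rewrite inE.
Qed.

Definition prod_uniform (R : realType) (Omega Sigma : finType)
  (mu : {ffun Omega -> R}) : {ffun Omega * Sigma -> R} :=
  [ffun x => mu x.1 / #|Sigma|%:R].

Section ProdUniform.
Variables (R : realType) (Omega Sigma : finType) (mu : {ffun Omega -> R}).
Hypothesis Sigma_gt0 : (0 < #|Sigma|)%N.

Lemma Pr_prod_uniform (E : pred Omega) (F : pred Sigma) :
  Pr (prod_uniform Sigma mu) (fun x => E x.1 && F x.2)
  = Pr mu E * #|F|%:R / #|Sigma|%:R.
Proof.
rewrite /Pr (eq_bigr _ (fun x _ => ffunE _ x)).
rewrite -(pair_big_dep E (fun _ => F) (fun w _ => mu w / #|Sigma|%:R)) /=.
rewrite !big_distrl; apply: eq_bigr => w _.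
by rewrite /= sumr_const -mulrnAl mulr_natr.
Qed.

Lemma Pr_prod_uniform_fst (E : pred Omega) :
  Pr (prod_uniform Sigma mu) (fun x => E x.1) = Pr mu E.
Proof.
have N_neq0 : #|Sigma|%:R != 0 :> R by rewrite pnatr_eq0 -lt0n.
transitivity (Pr (prod_uniform Sigma mu) (fun x => E x.1 && predT x.2)).
  by apply: eq_bigl => x; rewrite andbT.
by rewrite Pr_prod_uniform mulfK.
Qed.

Lemma is_distr_prod_uniform : is_distr mu -> is_distr (prod_uniform Sigma mu).
Proof.
move=> [mu_ge0 mu_sum1]; split=> [x | ]; first by rewrite ffunE divr_ge0.
by have := Pr_prod_uniform_fst predT; rewrite /Pr /= => ->.
Qed.

End ProdUniform.

Lemma card_ffun_agree (I T : finType) (S : {set I}) (z : {ffun I -> T}) :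
  (#|[set g : {ffun I -> T} | [forall j in S, g j == z j]]| * #|T| ^ #|S|
   = #|T| ^ #|I|)%N.
Proof.
pose F j := if j \in S then pred1 (z j) else predT.
have -> : #|[set g : {ffun I -> T} | [forall j in S, g j == z j]]|
          = foldr muln 1 [seq #|F j| | j : I].
  rewrite -card_family cardsE; apply: eq_card => g; rewrite inE.
  by apply/forallP/familyP => gz j; have := gz j; rewrite /F; case: (j \in S).
rewrite foldrE big_map big_enum (bigID (mem S)) /=.
rewrite big1 => [|j jS]; last by rewrite /F jS card1.
rewrite mul1n (eq_bigr (fun _ => #|T|)) => [|j /negbTE F_full]; last first.
  by rewrite /F F_full cardT.
rewrite (eq_bigl (fun j => j \in ~: S)) => [|j]; last by rewrite inE.
by rewrite prod_nat_const -expnD addnC cardsC.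
Qed.

Fixpoint query_seq (n : nat) (Sigma O : Type) (ps : seq 'I_n)
  (G : seq Sigma -> O) : dtree n Sigma O :=
  match ps with
  | [::] => Leaf (G [::])
  | p :: ps' => Query p (fun a => query_seq ps' (fun l => G (a :: l)))
  end.

Lemma run_query_seq (n : nat) (Sigma O : Type) (ps : seq 'I_n)
    (G : seq Sigma -> O) (y : 'I_n -> Sigma) :
  run_dtree (query_seq ps G) y = G (map y ps).
Proof. by elim: ps G => [|p ps IH] G //=; rewrite IH. Qed.

Lemma depth_query_seq (n : nat) (Sigma O : Type) (ps : seq 'I_n)
    (G : seq Sigma -> O) :
  depth_le (size ps) (query_seq ps G).
Proof. by elim: ps G => [|p ps IH] G; constructor. Qed.

(* The default [a0] of [nth] is never read: the answer list has length [q]. *)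
Definition nonadaptive_tree (n q : nat) (Sigma O : Type) (a0 : Sigma)
  (pos : {ffun 'I_q -> 'I_n}) (G : {ffun 'I_q -> Sigma} -> O) : dtree n Sigma O :=
  query_seq [seq pos t | t <- enum 'I_q] (fun l => G [ffun t : 'I_q => nth a0 l t]).

Lemma run_nonadaptive_tree (n q : nat) (Sigma O : Type) (a0 : Sigma)
    (pos : {ffun 'I_q -> 'I_n}) (G : {ffun 'I_q -> Sigma} -> O) (y : 'I_n -> Sigma) :
  run_dtree (nonadaptive_tree a0 pos G) y = G [ffun t => y (pos t)].
Proof.
rewrite run_query_seq; congr G; apply/ffunP => t; rewrite !ffunE -map_comp.
by rewrite (nth_map t) ?size_enum_ord // nth_ord_enum.
Qed.

Lemma depth_nonadaptive_tree (n q : nat) (Sigma O : Type) (a0 : Sigma)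
    (pos : {ffun 'I_q -> 'I_n}) (G : {ffun 'I_q -> Sigma} -> O) :
  depth_le q (nonadaptive_tree a0 pos G).
Proof.
have := depth_query_seq [seq pos t | t <- enum 'I_q]
  (fun l => G [ffun t : 'I_q => nth a0 l t]).
by rewrite size_map size_enum_ord.
Qed.

Definition prefer (T : finType) (u : T) (P : pred T) : T :=
  if P u then u else odflt u [pick v | P v].

Lemma prefer_eq (T : finType) (u v : T) (P : pred T) :
  P v -> u = v \/ (forall v', P v' -> v' = v) -> prefer u P = v.
Proof.
rewrite /prefer => Pv [-> | Pv_only]; first by rewrite Pv.
case: ifP => [/Pv_only // | _]; case: pickP => [v' /Pv_only // | P0].
by have := P0 v; rewrite Pv.
Qed.

Definition wrong_symbol (Sigma : eqType) (o : option Sigma) (v : Sigma) :=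
  (o != Some v) && (o != None).

Section RelaxedToLocal.
Variables (R : realType) (Sigma : finType) (n q : nat) (delta : R).
Variables (Omega : finType) (mu : {ffun Omega -> R}).
Variables (pos : Omega -> {ffun 'I_q -> 'I_n})
          (out : Omega -> {ffun 'I_q -> Sigma} -> option Sigma).
Hypotheses (mu_ge0 : forall w, 0 <= mu w) (mu_sum1 : \sum_w mu w = 1).
Hypotheses (delta_gt0 : 0 < delta) (q_gt0 : (0 < q)%N).

Definition answers (y : word Sigma n) w : {ffun 'I_q -> Sigma} :=
  [ffun t => y (pos w t)].

Definition queried w : {set 'I_n} := [set pos w t | t : 'I_q].

Definition query_prob j := Pr mu (fun w => j \in queried w).

Definition heavy : {set 'I_n} := [set j | q%:R <= delta * n%:R * query_prob j].

Lemma card_queried w : (#|queried w| <= q)%N.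
Proof. by rewrite -[q]card_ord leq_imset_card. Qed.

Lemma sum_query_prob : \sum_j query_prob j <= q%:R.
Proof.
rewrite sum_Pr //; apply: le_trans (_ : \sum_w mu w * q%:R <= _).
  by apply: ler_sum => w _; apply: ler_wpM2l; rewrite ?ler_nat ?card_queried.
by rewrite -mulr_suml mu_sum1 mul1r.
Qed.

Lemma card_heavy : #|heavy|%:R <= delta * n%:R.
Proof.
have q_pos : (0 : R) < q%:R by rewrite ltr0n.
have dn_ge0 : 0 <= delta * n%:R := mulr_ge0 (ltW delta_gt0) (ler0n _ _).
rewrite -(ler_pM2r q_pos).
apply: le_trans (@card_ge_mul_le_sum _ _ (fun j => delta * n%:R * query_prob j) _ _) _.
  by move=> j; rewrite mulr_ge0 ?Pr_ge0.
by rewrite -mulr_sumr ler_wpM2l // sum_query_prob.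
Qed.

Definition light_error (y x : word Sigma n) w :=
  [exists t, (pos w t \notin heavy) && (y (pos w t) != x (pos w t))].

Lemma Pr_light_error (r : R) (y x : word Sigma n) :
  0 <= r -> (hamming y x)%:R <= r * n%:R ->
  Pr mu (light_error y x) <= r * q%:R / delta.
Proof.
move=> r_ge0 y_close.
set D := [set j | y j != x j] :\: heavy.
apply: le_trans (_ : Pr mu (fun w => [exists j in D, j \in queried w]) <= _).
  apply: le_Pr => // w /existsP[t /andP[t_light t_err]].
  apply/existsP; exists (pos w t); rewrite in_setD t_light inE t_err /=.
  by apply/imsetP; exists t.
apply: le_trans (Pr_exists_le mu_ge0 D _) _.
have [/cards0_eq -> | D_gt0] := posnP #|D|.
  by rewrite big_set0 divr_ge0 ?mulr_ge0 ?ler0n // ltW.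
have dn_gt0 : 0 < delta * n%:R.
  by rewrite mulr_gt0 // ltr0n (leq_trans D_gt0) // (leq_trans (max_card _)) ?card_ord.
rewrite -(ler_pM2l dn_gt0) mulr_sumr.
apply: le_trans (_ : \sum_(j in D) (q%:R : R) <= _).
  by apply: ler_sum => j; rewrite !inE -ltNge => /andP[/ltW].
have -> : delta * n%:R * (r * q%:R / delta) = r * n%:R * q%:R.
  by field; rewrite gt_eqF.
rewrite sumr_const -[q%:R *+ _]mulr_natl; apply: ler_wpM2r => //.
apply: le_trans y_close; rewrite ler_nat subset_leq_card //.
by apply/subsetP => j; rewrite in_setD => /andP[_].
Qed.

Definition candidate w (a : {ffun 'I_q -> Sigma}) (v : Sigma) :=
  [exists z : {ffun 'I_n -> Sigma},
    [forall t, (pos w t \notin heavy) ==> (z (pos w t) == a t)]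
    && (out w (answers z w) == Some v)].

Lemma candidate_light_eq w (a a' : {ffun 'I_q -> Sigma}) :
  (forall t, pos w t \notin heavy -> a t = a' t) ->
  candidate w a =1 candidate w a'.
Proof.
move=> a_a' v; apply: eq_existsb => z; congr (_ && _); apply: eq_forallb => t.
by case: (boolP (pos w t \in heavy)) => //= /a_a' ->.
Qed.

Definition misleadable (x : word Sigma n) (v : Sigma) w :=
  [exists v', (v' != v) && candidate w (answers x w) v'].

Definition splice (g x : word Sigma n) : word Sigma n :=
  [ffun j => if j \in heavy then g j else x j].

Lemma hamming_splice_le (g x : word Sigma n) : (hamming (splice g x) x <= #|heavy|)%N.
Proof.
apply/subset_leq_card/subsetP => j; rewrite inE ffunE.
by case: ifP => // _; rewrite eqxx.
Qed.

Lemma card_splice_wrong (x : word Sigma n) (v v' : Sigma) w :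
  (0 < #|Sigma|)%N -> v' != v -> candidate w (answers x w) v' ->
  (#|Sigma| ^ n <=
   #|[pred g : {ffun 'I_n -> Sigma} | wrong_symbol (out w (answers (splice g x) w)) v]|
   * #|Sigma| ^ q)%N.
Proof.
move=> Sigma_gt0 v'v /existsP[z /andP[/forallP z_light /eqP z_out]].
have agree_wrong :
    [set g : {ffun 'I_n -> Sigma} | [forall j in queried w :&: heavy, g j == z j]]
    \subset [pred g | wrong_symbol (out w (answers (splice g x) w)) v].
  apply/subsetP => g; rewrite !inE => /forallP g_z.
  have -> : answers (splice g x) w = answers z w.
    apply/ffunP => t; rewrite !ffunE; case: ifP => t_heavy.
      apply/eqP; have := g_z (pos w t); rewrite inE t_heavy andbT => /implyP; apply.
      by apply/imsetP; exists t.
    by have := z_light t; rewrite t_heavy ffunE => /eqP.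
  by rewrite /wrong_symbol z_out andbT; apply: contraNneq v'v => -[->].
have := card_ffun_agree (queried w :&: heavy) z; rewrite card_ord => <-.
apply: leq_mul (subset_leq_card agree_wrong) (leq_pexp2l Sigma_gt0 _).
exact: leq_trans (subset_leq_card (subsetIl _ _)) (card_queried w).
Qed.

Lemma Pr_misleadable (s : R) (x : word Sigma n) (v : Sigma) :
  (0 < #|Sigma|)%N ->
  (forall y : word Sigma n, (hamming y x)%:R <= delta * n%:R ->
     Pr mu (fun w => wrong_symbol (out w (answers y w)) v) <= s) ->
  Pr mu (misleadable x v) <= s * #|Sigma|%:R ^+ q.
Proof.
move=> Sigma_gt0 sound.
pose wrong_at (g : {ffun 'I_n -> Sigma}) w :=
  wrong_symbol (out w (answers (splice g x) w)) v.
have sum_wrong : \sum_g Pr mu (wrong_at g) <= (#|Sigma| ^ n)%:R * s.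
  have splice_close g : (hamming (splice g x) x)%:R <= delta * n%:R.
    by apply: le_trans card_heavy; rewrite ler_nat hamming_splice_le.
  apply: le_trans (ler_sum _ (fun g _ => sound _ (splice_close g))) _.
  by rewrite sumr_const card_ffun card_ord mulr_natl.
rewrite sum_Pr // in sum_wrong.
have Nn_gt0 : (0 : R) < (#|Sigma| ^ n)%:R by rewrite ltr0n expn_gt0 Sigma_gt0.
rewrite -(ler_pM2r Nn_gt0).
apply: le_trans (_ : (\sum_w mu w * #|[pred g | wrong_at g w]|%:R)
                     * (#|Sigma| ^ q)%:R <= _); last first.
  apply: le_trans (ler_wpM2r (ler0n _ _) sum_wrong) _.
  by rewrite !natrX [X in _ <= X]mulrAC [_ * s]mulrC.
rewrite /Pr !mulr_suml [X in _ <= X](bigID (misleadable x v)) /=.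
rewrite -[X in X <= _]addr0; apply: lerD; last first.
  by apply: sumr_ge0 => w _; rewrite !mulr_ge0.
apply: ler_sum => w /existsP[v' /andP[v'v cand]].
rewrite -mulrA; apply: ler_wpM2l => //; rewrite -natrM ler_nat.
exact: card_splice_wrong Sigma_gt0 v'v cand.
Qed.

Definition local_decoder (x : Omega * Sigma) : dtree n Sigma Sigma :=
  nonadaptive_tree x.2 (pos x.1) (fun a => prefer x.2 (candidate x.1 a)).

Lemma local_decoder_correct (y x : word Sigma n) (v u : Sigma) w :
  ~~ light_error y x w -> out w (answers x w) = Some v ->
  u = v \/ ~~ misleadable x v w -> run_dtree (local_decoder (w, u)) y = v.
Proof.
move=> no_error x_decoded u_ok; rewrite run_nonadaptive_tree /=.
have same_candidates : candidate w (answers y w) =1 candidate w (answers x w).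
  apply: candidate_light_eq => t t_light; rewrite !ffunE; apply/eqP.
  by apply: contraNT no_error => y_err; apply/existsP; exists t; rewrite t_light.
apply: prefer_eq.
  rewrite same_candidates; apply/existsP; exists x; rewrite x_decoded eqxx andbT.
  by apply/forallP => t; rewrite ffunE eqxx implybT.
case: u_ok => [|not_misleadable]; [by left | right] => v'.
rewrite same_candidates => cand; apply/eqP; apply: contraNT not_misleadable => v'v.
by apply/existsP; exists v'; rewrite v'v.
Qed.

Lemma Pr_local_decoder_error (eps s r : R) (x : word Sigma n) (v : Sigma) :
  (0 < #|Sigma|)%N ->
  1 - eps <= Pr mu (fun w => out w (answers x w) == Some v) ->
  (forall y : word Sigma n, (hamming y x)%:R <= delta * n%:R ->
     Pr mu (fun w => wrong_symbol (out w (answers y w)) v) <= s) ->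
  0 <= r -> forall y : word Sigma n, (hamming y x)%:R <= r * n%:R ->
  Pr (prod_uniform Sigma mu) (fun x' => run_dtree (local_decoder x') y != v)
    <= eps + s * #|Sigma|%:R ^+ q * (1 - #|Sigma|%:R^-1) + r * q%:R / delta.
Proof.
move=> Sigma_gt0 complete sound r_ge0 y y_close.
have [mu'_ge0 _] := is_distr_prod_uniform Sigma_gt0 (conj mu_ge0 mu_sum1).
pose bad_seed w := light_error y x w || (out w (answers x w) != Some v).
apply: le_trans (_ : Pr (prod_uniform Sigma mu)
    (fun x' => bad_seed x'.1 || (misleadable x v x'.1 && (x'.2 != v))) <= _).
  apply: le_Pr => // -[w u] /=; apply: contraNT.
  rewrite negb_or negb_and negbK => /andP[/norP[no_error /negPn/eqP x_decoded] u_ok].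
  apply/eqP/(local_decoder_correct no_error x_decoded).
  by case/orP: u_ok => [not_misleadable | /eqP]; [right | left].
apply: le_trans (Pr_union_le mu'_ge0 _ _) _.
rewrite Pr_prod_uniform_fst // (Pr_prod_uniform _ _ (predC1 v)) cardC1.
have := Pr_union_le mu_ge0 (light_error y x) (fun w => out w (answers x w) != Some v).
have := Pr_light_error r_ge0 y_close.
have := Pr_predC (fun w => out w (answers x w) == Some v) mu_sum1.
have wrong_guess_prob : (#|Sigma|.-1)%:R / #|Sigma|%:R = 1 - #|Sigma|%:R^-1 :> R.
  by rewrite -subn1 natrB // mulrBl divff ?pnatr_eq0 -?lt0n // mul1r.
have Pr_misleadable_wrong_guess :
    Pr mu (misleadable x v) * (#|Sigma|.-1)%:R / #|Sigma|%:R
    <= s * #|Sigma|%:R ^+ q * (1 - #|Sigma|%:R^-1).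
  rewrite -mulrA wrong_guess_prob; apply: ler_wpM2r (Pr_misleadable Sigma_gt0 sound).
  by rewrite subr_ge0 invf_le1 ?ler1n ?ltr0n.
rewrite /bad_seed; lra.
Qed.

End RelaxedToLocal.

Lemma nonadaptive_RLDC_is_LDC (R : realType) (Sigma : finType) (k n q : nat)
    (C : word Sigma k -> word Sigma n) (delta eps s r : R) :
  0 < delta -> (0 < q)%N -> (0 < #|Sigma|)%N -> 0 <= r ->
  is_nonadaptive_RLDC C q delta (1 - eps) s ->
  is_LDC C q r
    (eps + s * #|Sigma|%:R ^+ q * (1 - #|Sigma|%:R^-1) + r * q%:R / delta).
Proof.
move=> delta_gt0 q_gt0 Sigma_gt0 r_ge0
  [Omega [mu [pos [out [[mu_ge0 mu_sum1] [complete sound]]]]]].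
exists (Omega * Sigma)%type, (prod_uniform Sigma mu),
  (fun i => local_decoder delta mu (pos i) (out i)).
split; first exact: is_distr_prod_uniform.
split=> [i x | b i]; first exact: depth_nonadaptive_tree.
apply: Pr_local_decoder_error => //; [exact: complete | exact: sound].
Qed.

Lemma gt0_of_lt_divM (R : realFieldType) (a b r : R) (m N : nat) :
  0 < r -> r < a / (m%:R * N%:R) * b -> (0 < m)%N /\ (0 < N)%N.
Proof.
move=> r_gt0; rewrite !lt0n.
by case: (m =P 0) => [-> | _]; case: (N =P 0) => [-> | _];
  rewrite ?mul0r ?mulr0 ?invr0 ?mulr0 ?mul0r // => /(lt_trans r_gt0); rewrite ltxx.
Qed.

Theorem mainTheorem6 :
  (forall (R : realType) (Sigma : finType) (k n q : nat)
     (C : word Sigma k -> word Sigma n) (delta eps s r : R),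
     0 < delta ->
     is_nonadaptive_RLDC C q delta (1 - eps) s ->
     s < ((#|Sigma|%:R) ^+ q)^-1 ->
     0 < r ->
     r < delta * (#|Sigma|%:R - 1) / (q%:R * #|Sigma|%:R)
         * (1 - eps * #|Sigma|%:R / (#|Sigma|%:R - 1)
              - s * (#|Sigma|%:R) ^+ q) ->
     is_LDC C q r
       (eps + s * (#|Sigma|%:R) ^+ q * (1 - (#|Sigma|%:R)^-1)
        + r * q%:R / delta))
  /\
  (forall (R : realType) (k n q : nat)
     (C : word bool k -> word bool n) (delta eps s r : R),
     0 < delta ->
     is_nonadaptive_RLDC C q delta (1 - eps) s ->
     s < ((2 : R) ^+ q)^-1 ->
     0 < r ->
     r < delta * (2 - 1) / (q%:R * 2)
         * (1 - eps * 2 / (2 - 1) - s * 2 ^+ q) ->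
     is_LDC C q r (eps + s * 2 ^+ q / 2 + r * q%:R / delta)).
Proof.
(* The bounds on [s] and [r] only make the error below 1 - 1/|Sigma|, that of a
   random guess; the upper bound on [r] is used only to exclude [q = 0] and an
   empty alphabet, where the junk value [x / 0 = 0] makes it unsatisfiable. *)
split=> [R Sigma k n q C delta eps s r | R k n q C delta eps s r]
  delta_gt0 rldc _ r_gt0 r_lt.
  have [q_gt0 Sigma_gt0] := gt0_of_lt_divM r_gt0 r_lt.
  exact: nonadaptive_RLDC_is_LDC (ltW r_gt0) rldc.
have [q_gt0 _] := gt0_of_lt_divM r_gt0 r_lt.
have := nonadaptive_RLDC_is_LDC delta_gt0 q_gt0 _ (ltW r_gt0) rldc.
rewrite card_bool => /(_ isT).
by have -> : s * 2 ^+ q / 2 = s * 2 ^+ q * (1 - 2^-1) :> R by field.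
Qed.
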